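(* Let $R$ be a semi-local arithmetic ring. Then $\lambda\text{-}\dim(R)\le 2$, and $R$ is coherent if and only if $R_M$ is coherent for every maximal ideal $M$ of $R$.
   Context: All rings are commutative with identity. Semi-local means finitely many maximal ideals. $R$ is arithmetic if $R_M$ is a valuation ring (ideals totally ordered by inclusion) for every maximal ideal $M$. For an $R$-module $E$, $\lambda_R(E)$ is the supremum of the $n$ for which there is an exact sequence $F_n\to\cdots\to F_0\to E\to0$ with $F_i$ free of finite rank ($-1$ if $E$ is not finitely generated); $\lambda\text{-}\dim(R)$ is the least $n$ (or $\infty$) such that $\lambda_R(E)\ge n$ implies $\lambda_R(E)=\infty$ for all $R$-modules $E$. *)

From HB Require Import structures.
From mathcomp Require Import all_boot all_order all_algebra.
Set Implicit Arguments. Unset Strict Implicit. Unset Printing Implicit Defensive.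
Import GRing.Theory.
Local Open Scope ring_scope.

Definition is_ideal (R : comPzRingType) (I : R -> Prop) : Prop :=
  [/\ I 0, (forall x y, I x -> I y -> I (x + y)) & (forall r x, I x -> I (r * x))].

Definition is_maximal_ideal (R : comPzRingType) (M : R -> Prop) : Prop :=
  [/\ is_ideal M, ~ M 1 &
      forall J : R -> Prop, is_ideal J -> (forall x, M x -> J x) ->
        ~ J 1 -> forall x, J x -> M x].

Definition semi_local (R : comPzRingType) : Prop :=
  exists (n : nat) (Ms : 'I_n -> R -> Prop),
    forall M, is_maximal_ideal M -> exists i, forall x, M x <-> Ms i x.

Definition valuation_ring (S : comPzRingType) : Prop :=
  forall I J : S -> Prop, is_ideal I -> is_ideal J ->
    (forall x, I x -> J x) \/ (forall x, J x -> I x).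

(* phi : R -> S is a localization of R at the prime ideal M, i.e. at the
   multiplicative set R \ M (characterized up to isomorphism by the usual
   universal data). *)
Definition is_localization_at (R S : comPzRingType) (M : R -> Prop)
    (phi : {rmorphism R -> S}) : Prop :=
  [/\ (forall s, ~ M s -> exists t, phi s * t = 1),
      (forall y : S, exists a s, ~ M s /\ y * phi s = phi a) &
      (forall a, phi a = 0 -> exists s, ~ M s /\ s * a = 0)].

Definition arithmetic (R : comPzRingType) : Prop :=
  forall M : R -> Prop, is_maximal_ideal M ->
    forall (S : comPzRingType) (phi : {rmorphism R -> S}),
      is_localization_at M phi -> valuation_ring S.

(* lambda_ge_sub E P n : the submodule P of E (viewed as a module) admits an
   exact sequence F_n -> ... -> F_1 -> F_0 -> P -> 0 with F_i = R^(k i) free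
   of finite rank; the map F_(i+1) -> F_i is x |-> x *m A i, and the map
   F_0 -> P is f (a linear map into E with image exactly P). *)
Definition lambda_ge_sub (R : comPzRingType) (E : lmodType R) (P : E -> Prop)
    (n : nat) : Prop :=
  exists (k : nat -> nat) (A : forall i, 'M[R]_(k i.+1, k i))
         (f : 'rV[R]_(k 0) -> E),
  [/\ linear f,
      (forall x, P (f x)),
      (forall y, P y -> exists x, f x = y),
      ((0 < n)%N -> forall x : 'rV[R]_(k 0),
          f x = 0 <-> exists z : 'rV[R]_(k 1), x = z *m A 0) &
      (forall i, (i.+1 < n)%N -> forall x : 'rV[R]_(k i.+1),
          x *m A i = 0 <-> exists z : 'rV[R]_(k i.+2), x = z *m A i.+1)].

Definition lambda_ge (R : comPzRingType) (E : lmodType R) (n : nat) : Prop :=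
  @lambda_ge_sub R E (fun _ => True) n.

Definition lambda_inf (R : comPzRingType) (E : lmodType R) : Prop :=
  forall n, @lambda_ge R E n.

Definition lambda_dim_prop (R : comPzRingType) (n : nat) : Prop :=
  forall E : lmodType R, @lambda_ge R E n -> @lambda_inf R E.

(* lambda-dim(R) <= d : the least n with lambda_dim_prop is <= d *)
Definition lambda_dim_le (R : comPzRingType) (d : nat) : Prop :=
  exists n, (n <= d)%N /\ lambda_dim_prop R n.

Definition fg_ideal (R : comPzRingType) (I : R -> Prop) : Prop :=
  exists (k : nat) (a : 'I_k -> R),
    forall x, I x <-> exists c : 'I_k -> R, x = \sum_(i < k) c i * a i.

Definition finitely_presented_sub (R : comPzRingType) (E : lmodType R)
    (P : E -> Prop) : Prop := @lambda_ge_sub R E P 1.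

Definition coherent (R : comPzRingType) : Prop :=
  forall I : R -> Prop, fg_ideal I -> @finitely_presented_sub R R^o I.

From HB Require Import structures.
From mathcomp Require Import all_boot all_order all_algebra all_fingroup.
From mathcomp Require Import boolp classical_sets ring generic_quotient.
Set Implicit Arguments. Unset Strict Implicit. Unset Printing Implicit Defensive.
Import GRing.Theory.
Local Open Scope ring_scope.

(* Over a ring in which divisibility is total, such as a valuation ring, every
   matrix has a diagonal Smith normal form, so a kernel of a matrix is a direct
   sum of annihilators. When that kernel is finitely generated, each summand is a
   finitely generated, hence principal, ideal (e), and the annihilator of e is
   principal again. Hence, whenever F_2 -> F_1 -> F_0 is exact with finite free
   F_i, the kernel of F_2 -> F_1 is finitely generated. Localization is exact,
   and with finitely many maximal ideals the finitely many local generators of a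
   kernel, cleared of denominators, generate it globally. Over a semi-local
   arithmetic ring this yields finitely generated kernels at every step of a
   free resolution (lambda-dim <= 2), and, applied to the relations of finitely
   generated ideals, the local-global principle for coherence. *)

Lemma matrix_choice (T : Type) m n (P : 'I_m -> 'I_n -> T -> Prop) :
  (forall i j, exists t, P i j t) -> exists A : 'M[T]_(m, n), forall i j, P i j (A i j).
Proof.
move=> /(fun H => choice (fun ij : 'I_m * 'I_n => H ij.1 ij.2)) [f Hf].
by exists (\matrix_(i, j) f (i, j)) => i j; rewrite mxE; apply: (Hf (i, j)).
Qed.

Lemma row_choice (T : Type) m n (P : 'I_m -> 'rV[T]_n -> Prop) :
  (forall i, exists z, P i z) -> exists A : 'M[T]_(m, n), forall i, P i (row i A).
Proof.
move=> /choice [f Hf]; exists (\matrix_(i, j) f i 0 j) => i.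
suff -> : row i (\matrix_(i, j) f i 0 j) = f i by [].
by apply/rowP => j; rewrite !mxE.
Qed.

Section MatrixKernels.
Variable R : comPzRingType.

Definition ker_span p q r (B : 'M[R]_(p, q)) (C : 'M[R]_(r, p)) :=
  forall x : 'rV_p, x *m B = 0 <-> exists z : 'rV_r, x = z *m C.

Definition ker_fg p q (B : 'M[R]_(p, q)) := exists r (C : 'M[R]_(r, p)), ker_span B C.

Lemma row_in_span r p (C : 'M[R]_(r, p)) (i : 'I_r) : exists z : 'rV_r, row i C = z *m C.
Proof. by exists (delta_mx 0 i); rewrite -rowE. Qed.

Lemma ker_span_mul0 p q r (B : 'M[R]_(p, q)) (C : 'M[R]_(r, p)) :
  ker_span B C -> C *m B = 0.
Proof.
move=> BC; apply/row_matrixP => i; rewrite row_mul row0; exact/BC/row_in_span.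
Qed.

Lemma row_span_sub r s p (C : 'M[R]_(r, p)) (C' : 'M[R]_(s, p)) :
  (forall x : 'rV_p, (exists z, x = z *m C) -> exists z, x = z *m C') ->
  exists U, C = U *m C'.
Proof.
move=> CC'; have [U HU] := row_choice (fun i => CC' _ (row_in_span C i)).
by exists U; apply/row_matrixP => i; rewrite row_mul HU.
Qed.

(* With [C = U C'] and [C' = V C], [ker C] is spanned by the rows of [1 - U V]
   and of [G V], where the rows of [G] span [ker C']. *)
Lemma ker_fg_span_eq r s p (C : 'M[R]_(r, p)) (C' : 'M[R]_(s, p)) :
  (forall x : 'rV_p, (exists z, x = z *m C) <-> (exists z, x = z *m C')) ->
  ker_fg C' -> ker_fg C.
Proof.
move=> CC' [t [G HG]].
have [U HU] := row_span_sub (fun x => proj1 (CC' x)).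
have [V HV] := row_span_sub (fun x => proj2 (CC' x)).
have GC' : G *m C' = 0 := ker_span_mul0 HG.
exists (r + t)%N, (col_mx (1%:M - U *m V) (G *m V)) => x; split.
- move=> xC; have /HG [z Hz] : (x *m U) *m C' = 0 by rewrite -mulmxA -HU.
  exists (row_mx x z); rewrite mul_row_col mulmxBr mulmx1 mulmxA -Hz.
  by rewrite mulmxA subrK.
- move=> [z ->]; rewrite -[z]hsubmxK mul_row_col mulmxDl -!mulmxA.
  rewrite mulmxBl mul1mx -(mulmxA U) -HV -HU subrr mulmx0 add0r.
  by rewrite GC' mulmx0.
Qed.

Definition mx_invertible n (A : 'M[R]_n) := exists A', A *m A' = 1%:M /\ A' *m A = 1%:M.

Lemma mx_invertibleM n (A B : 'M[R]_n) :
  mx_invertible A -> mx_invertible B -> mx_invertible (A *m B).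
Proof.
move=> [A' [AA' A'A]] [B' [BB' B'B]]; exists (B' *m A'); split.
- by rewrite mulmxA -(mulmxA A) BB' mulmx1 AA'.
- by rewrite mulmxA -(mulmxA B') A'A mulmx1 B'B.
Qed.

Lemma mx_invertible_tperm n (i j : 'I_n) : mx_invertible (tperm_mx i j).
Proof. by exists (tperm_mx i j); rewrite -perm_mxM tperm2 perm_mx1. Qed.

Lemma mx_invertible_block_diag m n (P : 'M[R]_n) :
  mx_invertible P -> mx_invertible (block_mx (1%:M : 'M_m) 0 0 P).
Proof.
move=> [P' [PP' P'P]]; exists (block_mx 1%:M 0 0 P'); rewrite !mulmx_block.
by rewrite !(mulmx0, mul0mx, mulmx1, mul1mx, addr0, add0r) PP' P'P -!scalar_mx_block.
Qed.

Lemma mx_invertible_lower m n (X : 'M[R]_(n, m)) :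
  mx_invertible (block_mx (1%:M : 'M_m) 0 X 1%:M).
Proof.
exists (block_mx 1%:M 0 (- X) 1%:M); rewrite !mulmx_block.
by rewrite !(mulmx0, mul0mx, mulmx1, mul1mx, addr0, add0r, addrN, addNr) -!scalar_mx_block.
Qed.

Lemma mx_invertible_upper m n (X : 'M[R]_(m, n)) :
  mx_invertible (block_mx (1%:M : 'M_m) X 0 1%:M).
Proof.
exists (block_mx 1%:M (- X) 0 1%:M); rewrite !mulmx_block.
by rewrite !(mulmx0, mul0mx, mulmx1, mul1mx, addr0, add0r, addrN, addNr) -!scalar_mx_block.
Qed.

Lemma ker_fg_mul_invertible p q (C : 'M[R]_(p, q)) (P : 'M[R]_q) :
  mx_invertible P -> ker_fg (C *m P) -> ker_fg C.
Proof.
move=> [P' [PP' _]] [r [G HG]]; exists r, G => x; rewrite -HG mulmxA.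
split=> [-> | xCP0]; first by rewrite mul0mx.
by rewrite -[x *m C]mulmx1 -PP' mulmxA xCP0 mul0mx.
Qed.

End MatrixKernels.

Definition divides (S : comPzRingType) (a b : S) := exists r, b = r * a.

Definition dvd_total (S : comPzRingType) := forall a b : S, divides b a \/ divides a b.

Definition is_unit (S : comPzRingType) (u : S) := exists w, u * w = 1.

Definition ideal_span (S : comPzRingType) s (v : 'I_s -> S) x :=
  exists z : 'I_s -> S, x = \sum_(i < s) z i * v i.

Lemma valuation_ring_dvd_total (S : comPzRingType) : valuation_ring S -> dvd_total S.
Proof.
move=> HV a b.
have principal_ideal (c : S) : is_ideal (divides c).
  split; first by exists 0; rewrite mul0r.
  - by move=> x y [r ->] [r' ->]; exists (r + r'); rewrite mulrDl.
  - by move=> s x [r ->]; exists (s * r); rewrite mulrA.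
have [ab|ba] := HV _ _ (principal_ideal a) (principal_ideal b).
- by left; apply: ab; exists 1; rewrite mul1r.
- by right; apply: ba; exists 1; rewrite mul1r.
Qed.

Section DivisibilityTotal.
Variable S : comPzRingType.
Hypothesis Stot : dvd_total S.

Lemma nonunitMl (t r : S) : ~ is_unit r -> ~ is_unit (t * r).
Proof. by move=> Nr [w Hw]; apply: Nr; exists (t * w); rewrite mulrCA mulrA. Qed.

Lemma nonunitD (x y : S) : ~ is_unit x -> ~ is_unit y -> ~ is_unit (x + y).
Proof.
move=> Nx Ny; have [[r ->]|[r ->]] := Stot x y.
- by rewrite -{2}[y]mul1r -mulrDl; apply: nonunitMl.
- by rewrite -{1}[x]mul1r -mulrDl; apply: nonunitMl.
Qed.

Lemma unit_1subr (t r : S) : ~ is_unit r -> is_unit (1 - t * r).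
Proof.
move=> Nr; apply: contrapT => N1tr.
have := nonunitD N1tr (nonunitMl (t := t) Nr); rewrite subrK.
by apply; exists 1; rewrite mulr1.
Qed.

(* [ann e = (d)], unless [e = 0] (then [ann e = S]) or [d = 0] (then [e] is a
   unit and [ann e = 0]). *)
Lemma ann_principal (d e : S) : (forall x, x * d = 0 <-> divides e x) ->
  exists g, forall x, x * e = 0 <-> divides g x.
Proof.
move=> ann_d.
have ed : e * d = 0 by apply/ann_d; exists 1; rewrite mul1r.
have [[c [ce Nc]]|] := pselect (exists c, c * e = 0 /\ ~ divides d c); last first.
  move=> N; exists d => x; split.
  - by move=> xe; apply: contrapT => Nx; apply: N; exists x.
  - by move=> [r ->]; rewrite -mulrA [d * e]mulrC ed mulr0.
have [/Nc //|[r dr]] := Stot c d.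
have Nr : ~ is_unit r.
  by move=> [w rw]; apply: Nc; exists w; rewrite dr mulrA [w * r]mulrC rw mul1r.
have [[s es]|[s rs]] := Stot e r.
- have [t st] : divides e s by apply/ann_d; rewrite dr mulrA -es mulrC ce.
  have e0 : e = 0.
    have [w Hw] := unit_1subr t Nr.
    have : e * (1 - t * r) = 0 by rewrite mulrBr mulr1 mulrA [e * t]mulrC -st -es subrr.
    by move=> H; rewrite -[e]mulr1 -Hw mulrA H mul0r.
  exists 1 => x; split; first by exists x; rewrite mulr1.
  by rewrite e0 mulr0.
- have d0 : d = 0 by rewrite dr rs -mulrA [e * c]mulrC ce mulr0.
  have [w Hw] : divides e 1 by apply/ann_d; rewrite d0 mulr0.
  exists 0 => x; split.
  + by move=> xe; exists 0; rewrite mulr0 -[x]mulr1 Hw mulrCA xe mulr0.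
  + by move=> [y ->]; rewrite mulr0 mul0r.
Qed.

Lemma ideal_span_principal s (v : 'I_s -> S) :
  exists e, forall x, ideal_span v x <-> divides e x.
Proof.
elim: s v => [|s IH] v.
  exists 0 => x; split.
  - by move=> [z ->]; exists 0; rewrite big_ord0 mulr0.
  - by move=> [r ->]; exists (fun _ => 0); rewrite big_ord0 mulr0.
have [e He] := IH (fun i => v (lift ord0 i)).
have span_rest (z : 'I_s.+1 -> S) : divides e (\sum_(i < s) z (lift ord0 i) * v (lift ord0 i)).
  by apply/He; exists (fun i => z (lift ord0 i)).
have [[r er]|[r ver]] := Stot e (v ord0).
- exists (v ord0) => x; split.
  + move=> [z ->]; rewrite big_ord_recl; have [r' ->] := span_rest z.
    by exists (z ord0 + r' * r); rewrite er mulrA -mulrDl.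
  + move=> [r' ->]; exists (fun i => if i == ord0 then r' else 0).
    rewrite big_ord_recl eqxx big1 ?addr0 // => i _.
    by rewrite eq_sym (negbTE (neq_lift _ _)) mul0r.
- exists e => x; split.
  + move=> [z ->]; rewrite big_ord_recl; have [r' ->] := span_rest z.
    by exists (z ord0 * r + r'); rewrite ver mulrA -mulrDl.
  + move=> /He [z ->]; exists (fun i => if unlift ord0 i is Some j then z j else 0).
    rewrite big_ord_recl unlift_none mul0r add0r.
    by apply: eq_bigr => i _; rewrite liftK.
Qed.

Lemma pivot_exists n (f : 'I_n.+1 -> S) : exists i, forall j, divides (f i) (f j).
Proof.
elim: n f => [|n IH] f.
  by exists ord0 => j; exists 1; rewrite mul1r (ord1 j).
have [i Hi] := IH (fun j => f (lift ord0 j)).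
have [[r er]|[r er]] := Stot (f ord0) (f (lift ord0 i)).
- exists (lift ord0 i) => j; case: (unliftP ord0 j) => [j' ->|->]; first exact: Hi.
  by exists r.
- exists ord0 => j; case: (unliftP ord0 j) => [j' ->|->]; last by exists 1; rewrite mul1r.
  by have [r' ->] := Hi j'; exists (r' * r); rewrite er mulrA.
Qed.

Lemma mx_pivot_exists m n (B : 'M[S]_(m.+1, n.+1)) :
  exists i0 j0, forall i j, divides (B i0 j0) (B i j).
Proof.
have [J HJ] := choice (fun i => pivot_exists (fun j => B i j)).
have [i0 Hi0] := pivot_exists (fun i => B i (J i)).
exists i0, (J i0) => i j.
have [r1 ->] := HJ i j; have [r2 /= ->] := Hi0 i.
by exists (r1 * r2); rewrite mulrA.
Qed.

Lemma pivot_clear m n (B : 'M[S]_(1 + m, 1 + n)) :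
  (forall i j, divides (B 0 0) (B i j)) ->
  exists L U (B' : 'M_(m, n)), [/\ mx_invertible L, mx_invertible U &
    L *m B *m U = block_mx (ulsubmx B) 0 0 B'].
Proof.
move=> Bdiv; have [Q HQ] := matrix_choice Bdiv.
pose g := dlsubmx Q; pose h := ursubmx Q.
have l0 k : lshift k (0 : 'I_1) = 0 :> 'I_(1 + k) by apply: val_inj.
have dlB : dlsubmx B = g *m ulsubmx B.
  apply/matrixP => i k; rewrite (ord1 k) !mxE big_ord1 !mxE HQ.
  by rewrite !l0.
have urB : ursubmx B = ulsubmx B *m h.
  apply/matrixP => k j; rewrite (ord1 k) !mxE big_ord1 !mxE HQ.
  by rewrite !l0 mulrC.
exists (block_mx 1%:M 0 (- g) 1%:M), (block_mx 1%:M (- h) 0 1%:M).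
exists (drsubmx B - g *m ursubmx B); split.
- exact: mx_invertible_lower.
- exact: mx_invertible_upper.
rewrite -[B in LHS]submxK !mulmx_block !(mulmx0, mul0mx, mulmx1, mul1mx, addr0, add0r).
rewrite dlB urB mulmxN !mulNmx !mulmxA !addNr mul0mx add0r.
by rewrite [_ + - _]addrC.
Qed.

Lemma smith_normal_form m n (B : 'M[S]_(m, n)) :
  exists P Q, [/\ mx_invertible P, mx_invertible Q & is_diag_mx (P *m B *m Q)].
Proof.
have one_inv k : mx_invertible (1%:M : 'M[S]_k) by exists 1%:M; rewrite mulmx1.
elim: m n B => [|m IH] [|n] B;
  try by exists 1%:M, 1%:M; split; rewrite // ?flatmx0 ?thinmx0 mx0_is_diag.
have [i0 [j0 Bdiv]] := mx_pivot_exists B.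
pose B1 : 'M_(1 + m, 1 + n) := tperm_mx 0 i0 *m B *m tperm_mx 0 j0.
have B1div i j : divides (B1 0 0) (B1 i j).
  by rewrite /B1 -xrowE -xcolE !mxE !tpermL; apply: Bdiv.
have [L [U [B' [iL iU LBU]]]] := pivot_clear B1div.
have [P' [Q' [iP' iQ' dB']]] := IH n B'.
exists (block_mx (1%:M : 'M_1) 0 0 P' *m L *m tperm_mx 0 i0).
exists (tperm_mx 0 j0 *m U *m block_mx (1%:M : 'M_1) 0 0 Q'); split.
- apply: mx_invertibleM; first apply: mx_invertibleM => //.
  + exact: (@mx_invertible_block_diag _ 1 m P' iP').
  + exact: mx_invertible_tperm.
- apply: mx_invertibleM; first apply: mx_invertibleM => //.
  + exact: mx_invertible_tperm.
  + exact: (@mx_invertible_block_diag _ 1 n Q' iQ').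
have -> : block_mx 1%:M 0 0 P' *m L *m tperm_mx 0 i0 *m B *m
    (tperm_mx 0 j0 *m U *m block_mx 1%:M 0 0 Q') =
    block_mx (1%:M : 'M_1) 0 0 P' *m (L *m B1 *m U) *m block_mx 1%:M 0 0 Q'.
  by rewrite /B1 !mulmxA.
rewrite LBU !mulmx_block !(mulmx0, mul0mx, mulmx1, mul1mx, addr0, add0r).
have := @is_diag_block_mx _ 1 m 1 n (ulsubmx B1) 0 0 (P' *m B' *m Q') erefl.
by rewrite !eqxx mx11_is_diag dB'.
Qed.

End DivisibilityTotal.

Section DiagonalKernels.
Variable S : comPzRingType.

Lemma row_mul_diag_mx p (e x : 'rV[S]_p) :
  (exists z, x = z *m diag_mx e) <-> forall i, divides (e 0 i) (x 0 i).
Proof.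
split=> [[z ->] i | ex]; first by exists (z 0 i); rewrite mul_mx_diag mxE.
have [z Hz] := matrix_choice (fun (_ : 'I_1) i => ex i).
by exists z; apply/rowP => i; rewrite mul_mx_diag mxE (Hz 0).
Qed.

Lemma mul_diag_mx_eq0 p (e x : 'rV[S]_p) :
  x *m diag_mx e = 0 <-> forall i, x 0 i * e 0 i = 0.
Proof.
rewrite mul_mx_diag; split=> [/rowP H i | H]; first by have := H i; rewrite !mxE.
by apply/rowP => i; rewrite !mxE H.
Qed.

Lemma ker_span_diag_mx p (e g : 'rV[S]_p) :
  (forall i x, x * e 0 i = 0 <-> divides (g 0 i) x) ->
  ker_span (diag_mx e) (diag_mx g).
Proof.
by move=> eg x; rewrite mul_diag_mx_eq0 row_mul_diag_mx; split=> H i; apply/eg/H.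
Qed.

(* The entry of a rectangular diagonal matrix in row [i] (0 past the last column). *)
Definition diag_entry p q (D : 'M[S]_(p, q)) (i : 'I_p) := \sum_(j < q | i == j :> nat) D i j.

Lemma diag_entryE p q (D : 'M[S]_(p, q)) (i : 'I_p) (j : 'I_q) :
  i = j :> nat -> diag_entry D i = D i j.
Proof.
move=> ij; rewrite /diag_entry (bigD1 j) /=; last exact/eqP.
rewrite big1 ?addr0 // => j' /andP [/eqP ij' nj']; exfalso.
by move/negP: nj'; apply; apply/eqP/val_inj; rewrite /= -ij' ij.
Qed.

Lemma diag_entry0 p q (D : 'M[S]_(p, q)) (i : 'I_p) :
  (forall j : 'I_q, i <> j :> nat) -> diag_entry D i = 0.
Proof. by move=> Ni; rewrite /diag_entry big1 // => j /eqP /Ni. Qed.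

Lemma mul_diag_eq0 p q (D : 'M[S]_(p, q)) (y : 'rV[S]_p) : is_diag_mx D ->
  y *m D = 0 <-> forall i, y 0 i * diag_entry D i = 0.
Proof.
move=> /is_diag_mxP Ddiag.
have yDE (i : 'I_p) (j : 'I_q) : i = j :> nat -> (y *m D) 0 j = y 0 i * D i j.
  move=> ij; rewrite mxE (bigD1 i) //= big1 ?addr0 // => i' ni'.
  rewrite Ddiag ?mulr0 //; apply: contra ni' => /eqP i'j.
  by apply/eqP/val_inj; rewrite /= i'j ij.
have yD0 (j : 'I_q) : (forall i : 'I_p, i <> j :> nat) -> (y *m D) 0 j = 0.
  by move=> Nj; rewrite mxE big1 // => i _; rewrite Ddiag ?mulr0 //; apply/eqP/Nj.
split=> [yD i | H].
- have [[j ij]|Ni] := pselect (exists j : 'I_q, i = j :> nat).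
    by rewrite (diag_entryE D ij) -(yDE _ _ ij) yD mxE.
  by rewrite diag_entry0 ?mulr0 // => j ij; apply: Ni; exists j.
- apply/rowP => j; rewrite [RHS]mxE.
  have [[i ij]|Nj] := pselect (exists i : 'I_p, i = j :> nat).
    by rewrite (yDE _ _ ij) -(diag_entryE D ij) H.
  by rewrite yD0 // => i ij; apply: Nj; exists i.
Qed.

Lemma ann_diag_entry p q r (D : 'M[S]_(p, q)) (G : 'M[S]_(r, p)) :
  is_diag_mx D -> ker_span D G ->
  forall i a, a * diag_entry D i = 0 <-> ideal_span (fun l => G l i) a.
Proof.
move=> Ddiag DG i a; split.
- move=> ad; have [z Hz] : exists z : 'rV_r, a *: (delta_mx 0 i : 'rV_p) = z *m G.
    apply/DG/(mul_diag_eq0 _ Ddiag) => i'; rewrite !mxE.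
    by case: (eqVneq i' i) => [->|ne]; rewrite ?eqxx ?mulr1 // ?andbF mulr0 mul0r.
  exists (fun l => z 0 l); move/rowP: Hz => /(_ i).
  by rewrite !mxE !eqxx mulr1.
- move=> [z ->]; have /(mul_diag_eq0 _ Ddiag) /(_ i) : (\row_l z l) *m G *m D = 0.
    by apply/DG; exists (\row_l z l).
  by rewrite mxE; under eq_bigr do rewrite mxE.
Qed.

End DiagonalKernels.

Section ValuationKernels.
Variable S : comPzRingType.
Hypothesis Stot : dvd_total S.

(* With [D] diagonal, [im G = ker D] is the direct sum of the annihilators of the
   diagonal entries; each is finitely generated, hence principal, say [(e_i)], and
   then [ker (diag e)] is the direct sum of the principal ideals [ann e_i]. *)
Lemma diag_ker_span_fg p q r (D : 'M[S]_(p, q)) (G : 'M[S]_(r, p)) :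
  is_diag_mx D -> ker_span D G -> ker_fg G.
Proof.
move=> Ddiag DG; have annD := ann_diag_entry Ddiag DG.
have [e He] := choice (fun i => ideal_span_principal Stot (fun l => G l i)).
have [g Hg] := choice (fun i => ann_principal Stot (d := diag_entry D i) (e := e i)
  (fun x => iff_trans (annD i x) (He i x))).
pose er : 'rV_p := \row_i e i; pose gr : 'rV_p := \row_i g i.
apply: (@ker_fg_span_eq _ _ _ _ G (diag_mx er)).
  move=> x; rewrite -DG (mul_diag_eq0 _ Ddiag) row_mul_diag_mx.
  by split=> H i; have := H i; rewrite mxE annD He.
exists p, (diag_mx gr); apply: ker_span_diag_mx => i x; rewrite !mxE; exact: Hg.
Qed.

Lemma ker_fg_of_ker_span p q r (B : 'M[S]_(p, q)) (C : 'M[S]_(r, p)) :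
  ker_span B C -> ker_fg C.
Proof.
move=> BC; have [P [Q [[P' [PP' P'P]] [Q' [QQ' _]] Ddiag]]] := smith_normal_form Stot B.
apply: (@ker_fg_mul_invertible _ _ _ _ P'); first by exists P.
apply: (diag_ker_span_fg Ddiag) => y; split.
- move=> yD; have yPBQ : y *m P *m B *m Q = 0 by rewrite -yD !mulmxA.
  have /BC [z Hz] : (y *m P) *m B = 0.
    by rewrite -[_ *m B]mulmx1 -QQ' mulmxA yPBQ mul0mx.
  by exists z; rewrite mulmxA -Hz -mulmxA PP' mulmx1.
- move=> [z ->]; rewrite !mulmxA -(mulmxA (z *m C)) P'P mulmx1.
  by rewrite -(mulmxA z) (ker_span_mul0 BC) mulmx0 mul0mx.
Qed.

End ValuationKernels.

Section MaximalIdeals.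
Variables (R : comPzRingType) (M : R -> Prop).
Hypothesis maxM : is_maximal_ideal M.

Lemma maximal_ideal_notin1 : ~ M 1.
Proof. by case: maxM. Qed.

(* [M + Ra] is an ideal strictly larger than [M], so it contains 1. *)
Lemma maximal_ideal_notinM a b : ~ M a -> ~ M b -> ~ M (a * b).
Proof.
case: maxM => [[M0 MD MM] _ Mmax] Ma Mb Mab.
pose J x := exists m r, M m /\ x = m + r * a.
have J_ideal : is_ideal J.
  split; first by exists 0, 0; rewrite mul0r addr0.
  - move=> x y [m [r [Mm ->]]] [m' [r' [Mm' ->]]].
    by exists (m + m'), (r + r'); split; [exact: MD | rewrite mulrDl addrACA].
  - move=> s x [m [r [Mm ->]]]; exists (s * m), (s * r).
    by split; [exact: MM | rewrite mulrDr mulrA].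
have [m [r [Mm E1]]] : J 1.
  apply: contrapT => NJ1; apply: Ma; apply: (Mmax J J_ideal) => //.
  - by move=> x Mx; exists x, 0; rewrite mul0r addr0.
  - by exists 0, 1; rewrite add0r mul1r.
apply: Mb; have -> : b = b * m + r * (a * b).
  by rewrite -{1}[b]mulr1 E1 mulrDr mulrCA [b * a]mulrC.
by apply: MD; apply: MM.
Qed.

Lemma maximal_ideal_notin_prod (I : finType) (f : I -> R) :
  (forall i, ~ M (f i)) -> ~ M (\prod_i f i).
Proof.
move=> Mf; elim/big_rec: _ => [|i x _ Mx]; first exact: maximal_ideal_notin1.
exact: maximal_ideal_notinM.
Qed.

End MaximalIdeals.

Definition proper_ideal_over (R : comPzRingType) (J I : R -> Prop) :=
  [/\ is_ideal I, ~ I 1 & forall x, J x -> I x].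

Lemma proper_ideal_over_chain_union (R : comPzRingType) (J : R -> Prop)
    (A : (R -> Prop) -> Prop) :
  (exists I, A I) -> (forall I, A I -> proper_ideal_over J I) ->
  (forall I I', A I -> A I' -> (forall x, I x -> I' x) \/ (forall x, I' x -> I x)) ->
  proper_ideal_over J (fun x => exists I, A I /\ I x).
Proof.
move=> [I0 AI0] AJ chainA; have [[? _ _] _ JI0] := AJ I0 AI0.
split; last by move=> x Jx; exists I0; split => //; apply: JI0.
- split; first by exists I0.
  + move=> x y [I [AI Ix]] [I' [AI' I'y]].
    have [[_ DI _] _ _] := AJ I AI; have [[_ DI' _] _ _] := AJ I' AI'.
    have [II'|I'I] := chainA _ _ AI AI'.
    * by exists I'; split => //; apply: DI' => //; apply: II'.
    * by exists I; split => //; apply: DI => //; apply: I'I.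
  + move=> r x [I [AI Ix]]; have [[_ _ MI] _ _] := AJ I AI.
    by exists I; split => //; apply: MI.
- by move=> [I [AI I1]]; have [_ NI1 _] := AJ I AI.
Qed.

Lemma ideal_sub_maximal (R : comPzRingType) (J : R -> Prop) : is_ideal J -> ~ J 1 ->
  exists M, is_maximal_ideal M /\ forall x, J x -> M x.
Proof.
move=> J_ideal NJ1; pose T := {I : R -> Prop | proper_ideal_over J I}.
pose t0 : T := exist _ J (And3 J_ideal NJ1 (fun x Jx => Jx)).
pose le := fun s t : T => `[< forall x, sval s x -> sval t x >].
have [t tmax] : exists t, premaximal le t.
  apply: (@ZL_preorder T t0 le).
  - by move=> s; apply/asboolP.
  - by move=> r s u /asboolP rs /asboolP su; apply/asboolP => x /rs /su.
  move=> A chainA; have [[s0 As0]|NA] := pselect (exists s, A s); last first.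
    by exists t0 => s As; exfalso; apply: NA; exists s.
  pose B I := exists2 s, A s & sval s = I.
  have B_ok : proper_ideal_over J (fun x => exists I, B I /\ I x).
    apply: proper_ideal_over_chain_union; first by exists (sval s0), s0.
      by move=> I [s _ <-]; apply: svalP.
    move=> I I' [s As <-] [s' As' <-].
    by have [/asboolP|/asboolP] := chainA _ _ As As'; [left|right].
  exists (exist _ _ B_ok) => s As; apply/asboolP => x sx.
  by exists (sval s); split => //; exists s.
exists (sval t); case: (svalP t) => t_ideal Nt1 Jt; split => //; split => // K K_ideal tK NK1.
have K_ok : proper_ideal_over J K by split => // y /Jt /tK.
by have /asboolP := tmax (exist _ K K_ok) (introT (asboolP _) tK).
Qed.

(* After inverting the elements outside [N], the rows of [H] span the kernel of [C]. *)
Definition loc_ker_gen (R : comPzRingType) (N : R -> Prop) p q s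
    (C : 'M[R]_(p, q)) (H : 'M[R]_(s, p)) :=
  forall x : 'rV_p, x *m C = 0 -> exists t, ~ N t /\ exists z, t *: x = z *m H.

Section LocalizationFacts.
Variables (R S : comPzRingType) (M : R -> Prop) (phi : {rmorphism R -> S}).
Hypotheses (maxM : is_maximal_ideal M) (locS : is_localization_at M phi).

Lemma loc_invertible t : ~ M t -> exists w, phi t * w = 1.
Proof. by case: locS => inv _ _; apply: inv. Qed.

Lemma loc_common_denominator m n (A : 'M[S]_(m, n)) :
  exists t (c : 'M[R]_(m, n)), ~ M t /\ phi t *: A = map_mx phi c.
Proof.
case: locS => _ frac _.
have [a Ha] := choice (fun k : 'I_m * 'I_n => frac (A k.1 k.2)).
have [s Hs] := choice Ha.
exists (\prod_k s k), (\matrix_(i, j) (a (i, j) * \prod_(k | k != (i, j)) s k)); split.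
  by apply: maximal_ideal_notin_prod => // k; case: (Hs k).
apply/matrixP => i j; rewrite !mxE (bigD1 (i, j)) //= !rmorphM.
case: (Hs (i, j)) => _ /= <-.
by rewrite rmorph_prod mulrC -!mulrA [phi (s _) * _]mulrC.
Qed.

Lemma loc_map_mx_eq0 m n (A : 'M[R]_(m, n)) :
  map_mx phi A = 0 -> exists u, ~ M u /\ u *: A = 0.
Proof.
case: locS => _ _ ker /matrixP A0.
have uA0 (k : 'I_m * 'I_n) : exists u, ~ M u /\ u * A k.1 k.2 = 0.
  by apply: ker; have := A0 k.1 k.2; rewrite !mxE.
have [u Hu] := choice uA0.
exists (\prod_k u k); split.
  by apply: maximal_ideal_notin_prod => // k; case: (Hu k).
apply/matrixP => i j; rewrite !mxE (bigD1 (i, j)) //= -mulrA [_ * A i j]mulrC mulrA.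
by case: (Hu (i, j)) => _ /= ->; rewrite ?mulr0 ?mul0r.
Qed.

Lemma ker_span_map p q r (B : 'M[R]_(p, q)) (C : 'M[R]_(r, p)) :
  ker_span B C -> ker_span (map_mx phi B) (map_mx phi C).
Proof.
move=> BC x; split; last first.
  by move=> [z ->]; rewrite -mulmxA -map_mxM (ker_span_mul0 BC) map_mx0 mulmx0.
move=> xB; have [t [c [Mt tx]]] := loc_common_denominator x.
have /loc_map_mx_eq0 [u [Mu ucB]] : map_mx phi (c *m B) = 0.
  by rewrite map_mxM -tx -scalemxAl xB scaler0.
have /BC [z Hz] : (u *: c) *m B = 0 by rewrite -scalemxAl.
have [w Hw] := loc_invertible (maximal_ideal_notinM maxM Mu Mt).
exists (w *: map_mx phi z).
rewrite -scalemxAl -map_mxM -Hz map_mxZ -tx !scalerA -mulrA -rmorphM.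
by rewrite [w * _]mulrC Hw scale1r.
Qed.

Lemma ker_fg_map p q (B : 'M[R]_(p, q)) : ker_fg B -> ker_fg (map_mx phi B).
Proof. by move=> [r [C BC]]; exists r, (map_mx phi C); apply: ker_span_map. Qed.

Lemma loc_ker_gen_of_map p q (C : 'M[R]_(p, q)) :
  ker_fg (map_mx phi C) -> exists s (H : 'M_(s, p)), H *m C = 0 /\ loc_ker_gen M C H.
Proof.
move=> [s [G CG]]; have [t [H0 [Mt tG]]] := loc_common_denominator G.
have /loc_map_mx_eq0 [u [Mu uH0C]] : map_mx phi (H0 *m C) = 0.
  by rewrite map_mxM -tG -scalemxAl (ker_span_mul0 CG) scaler0.
exists s, (u *: H0); split=> [|x xC]; first by rewrite -scalemxAl.
have /CG [z Hz] : map_mx phi x *m map_mx phi C = 0 by rewrite -map_mxM xC map_mx0.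
have [v [y [Mv vz]]] := loc_common_denominator z.
have /loc_map_mx_eq0 [w [Mw Hw]] : map_mx phi ((v * u * t) *: x - y *m (u *: H0)) = 0.
  rewrite map_mxB map_mxZ Hz map_mxM -vz map_mxZ -scalemxAl -tG.
  rewrite !rmorphM -!scalerA scalemxAr scalemxAr.
  by rewrite [phi u *: (phi t *: _)]scalerA [phi u * _]mulrC -scalerA subrr.
exists (w * (v * u * t)); split.
  by do 3![apply: maximal_ideal_notinM => //].
exists (w *: y); move: Hw; rewrite scalerBr scalerA -scalemxAl.
by move/eqP; rewrite subr_eq0 => /eqP.
Qed.

End LocalizationFacts.

Section LocalGlobal.
Variable R : comPzRingType.

Lemma loc_ker_gen_col_mxl (N : R -> Prop) p q s s' (C : 'M[R]_(p, q))
    (H : 'M_(s, p)) (H' : 'M_(s', p)) :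
  loc_ker_gen N C H -> loc_ker_gen N C (col_mx H H').
Proof.
move=> locH x /locH [t [Nt [z Hz]]]; exists t; split => //.
by exists (row_mx z 0); rewrite mul_row_col mul0mx addr0.
Qed.

Lemma loc_ker_gen_col_mxr (N : R -> Prop) p q s s' (C : 'M[R]_(p, q))
    (H : 'M_(s, p)) (H' : 'M_(s', p)) :
  loc_ker_gen N C H -> loc_ker_gen N C (col_mx H' H).
Proof.
move=> locH x /locH [t [Nt [z Hz]]]; exists t; split => //.
by exists (row_mx 0 z); rewrite mul_row_col mul0mx add0r.
Qed.

Lemma common_loc_ker_gen n (Ns : 'I_n -> R -> Prop) (P : 'I_n -> Prop)
    p q (C : 'M[R]_(p, q)) :
  (forall i, P i -> exists s (H : 'M_(s, p)), H *m C = 0 /\ loc_ker_gen (Ns i) C H) ->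
  exists s (H : 'M_(s, p)), H *m C = 0 /\ forall i, P i -> loc_ker_gen (Ns i) C H.
Proof.
elim: n Ns P => [|n IH] Ns P locC; first by exists 0%N, 0; split=> [|[]]; rewrite ?mul0mx.
have [s1 [H1 [H1C locH1]]] := IH _ _ (fun i => locC (lift ord0 i)).
have [s0 [H0 [H0C locH0]]] : exists s0 (H0 : 'M_(s0, p)),
    H0 *m C = 0 /\ (P ord0 -> loc_ker_gen (Ns ord0) C H0).
  have [/locC [s0 [H0 [H0C locH0]]]|NP0] := pselect (P ord0).
    by exists s0, H0.
  by exists 0%N, 0; split=> [|/NP0 //]; rewrite mul0mx.
exists (s0 + s1)%N, (col_mx H0 H1); split; first by rewrite mul_col_mx H0C H1C col_mx0.
move=> i; case: (unliftP ord0 i) => [i' ->|->] Pi.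
- exact/loc_ker_gen_col_mxr/locH1.
- exact/loc_ker_gen_col_mxl/locH0.
Qed.

(* The multipliers [t] with [t x] in the row span of [H] form an ideal lying in
   no maximal ideal. *)
Lemma ker_span_of_loc_ker_gen p q s (C : 'M[R]_(p, q)) (H : 'M[R]_(s, p)) :
  H *m C = 0 -> (forall N, is_maximal_ideal N -> loc_ker_gen N C H) -> ker_span C H.
Proof.
move=> HC locH x; split; last by move=> [z ->]; rewrite -mulmxA HC mulmx0.
move=> xC; pose J t := exists z, t *: x = z *m H.
have J_ideal : is_ideal J.
  split; first by exists 0; rewrite scale0r mul0mx.
  - by move=> a b [z Hz] [z' Hz']; exists (z + z'); rewrite scalerDl Hz Hz' mulmxDl.
  - by move=> r a [z Hz]; exists (r *: z); rewrite -scalerA Hz scalemxAl.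
have [[z Hz]|NJ1] := pselect (J 1); first by exists z; rewrite -Hz scale1r.
have [N [maxN JN]] := ideal_sub_maximal J_ideal NJ1.
by have [t [Nt /JN]] := locH N maxN x xC.
Qed.

Lemma ker_fg_of_locally_fg p q (C : 'M[R]_(p, q)) : semi_local R ->
  (forall N, is_maximal_ideal N ->
     exists s (H : 'M_(s, p)), H *m C = 0 /\ loc_ker_gen N C H) ->
  ker_fg C.
Proof.
move=> [n [Ns Nsmax]] locC.
have [s [H [HC locH]]] := common_loc_ker_gen (P := fun i => is_maximal_ideal (Ns i))
  (fun i => locC (Ns i)).
exists s, H; apply: ker_span_of_loc_ker_gen => // N maxN.
have [i Ni] := Nsmax N maxN.
have ENi : N = Ns i by apply/funext => y; apply/propext.
by rewrite ENi in maxN *; apply: locH.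
Qed.

End LocalGlobal.

Module Localization.
Local Open Scope quotient_scope.
Section Construction.
Variables (R : comPzRingType) (M : R -> Prop).
Hypothesis maxM : is_maximal_ideal M.

Let notM1 : ~ M 1 := maximal_ideal_notin1 maxM.

Definition frac := {p : R * R | `[< ~ M p.2 >]}.
Definition num (x : frac) := (val x).1.
Definition den (x : frac) := (val x).2.

Lemma den_notin (x : frac) : ~ M (den x).
Proof. exact: elimT (asboolP _) (valP x). Qed.

(* The default fraction of [insubd] is never used: every denominator passed to
   [mkfrac] below lies outside [M]. *)
Definition mkfrac (a s : R) : frac :=
  insubd (exist _ (0, 1) (introT (asboolP _) notM1) : frac) (a, s).

Lemma mkfracE a s : ~ M s -> num (mkfrac a s) = a /\ den (mkfrac a s) = s.
Proof. by move=> Ms; rewrite /num /den /mkfrac insubdK //; apply/asboolP. Qed.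

Definition fequiv (x y : frac) : bool :=
  `[< exists u, ~ M u /\ u * (num x * den y - num y * den x) = 0 >].

Lemma fequivP x y :
  reflect (exists u, ~ M u /\ u * (num x * den y - num y * den x) = 0) (fequiv x y).
Proof. exact: asboolP. Qed.

Lemma fequiv_refl : reflexive fequiv.
Proof.
by move=> x; apply/fequivP; exists 1; rewrite subrr mulr0.
Qed.

Lemma fequiv_sym : symmetric fequiv.
Proof.
by move=> x y; apply/fequivP/fequivP => -[u [Mu Hu]]; exists u; rewrite -opprB mulrN Hu oppr0.
Qed.

Lemma fequiv_trans : transitive fequiv.
Proof.
move=> y x z /fequivP [u [Mu Hu]] /fequivP [v [Mv Hv]]; apply/fequivP.
exists (u * v * den y); split.
  exact (maximal_ideal_notinM maxM (maximal_ideal_notinM maxM Mu Mv) (@den_notin y)).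
have -> : u * v * den y * (num x * den z - num z * den x) =
  v * den z * (u * (num x * den y - num y * den x)) +
  u * den x * (v * (num y * den z - num z * den y)) by ring.
by rewrite Hu Hv !mulr0 addr0.
Qed.

Canonical fequiv_equiv := EquivRel fequiv fequiv_refl fequiv_sym fequiv_trans.
Definition loc := {eq_quot fequiv}.
HB.instance Definition _ : EqQuotient _ fequiv loc := EqQuotient.on loc.
HB.instance Definition _ := Choice.on loc.

Lemma eq_fracP (x y : frac) : \pi_loc x = \pi_loc y <->
  exists u, ~ M u /\ u * (num x * den y - num y * den x) = 0.
Proof. by split=> [/eqmodP/fequivP // | ?]; apply/eqmodP/fequivP. Qed.

Lemma eq_frac (x y : frac) : num x * den y = num y * den x -> \pi_loc x = \pi_loc y.
Proof.
by move=> xy; apply/eq_fracP; exists 1; rewrite xy subrr mulr0.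
Qed.

Lemma fequiv_repr (x : frac) : fequiv x (repr (\pi_loc x)).
Proof. by apply/eqmodP; rewrite reprK. Qed.

Definition addf (x y : frac) := mkfrac (num x * den y + num y * den x) (den x * den y).
Definition oppf (x : frac) := mkfrac (- num x) (den x).
Definition mulf (x y : frac) := mkfrac (num x * num y) (den x * den y).

Lemma addfE x y : num (addf x y) = num x * den y + num y * den x /\
  den (addf x y) = den x * den y.
Proof. exact/mkfracE/(maximal_ideal_notinM maxM)/den_notin/den_notin. Qed.

Lemma oppfE x : num (oppf x) = - num x /\ den (oppf x) = den x.
Proof. exact/mkfracE/den_notin. Qed.

Lemma mulfE x y : num (mulf x y) = num x * num y /\ den (mulf x y) = den x * den y.
Proof. exact/mkfracE/(maximal_ideal_notinM maxM)/den_notin/den_notin. Qed.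

Lemma addf_compat x x' y y' : fequiv x x' -> fequiv y y' ->
  fequiv (addf x y) (addf x' y').
Proof.
move=> /fequivP [u [Mu Hu]] /fequivP [v [Mv Hv]]; apply/fequivP.
exists (u * v); split; first exact (maximal_ideal_notinM maxM Mu Mv).
have [-> ->] := addfE x y; have [-> ->] := addfE x' y'.
have -> : u * v * ((num x * den y + num y * den x) * (den x' * den y') -
    (num x' * den y' + num y' * den x') * (den x * den y)) =
  v * den y * den y' * (u * (num x * den x' - num x' * den x)) +
  u * den x * den x' * (v * (num y * den y' - num y' * den y)) by ring.
by rewrite Hu Hv !mulr0 addr0.
Qed.

Lemma oppf_compat x x' : fequiv x x' -> fequiv (oppf x) (oppf x').
Proof.
move=> /fequivP [u [Mu Hu]]; apply/fequivP; exists u; split => //.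
have [-> ->] := oppfE x; have [-> ->] := oppfE x'.
by rewrite -[RHS]oppr0 -Hu; ring.
Qed.

Lemma mulf_compat x x' y y' : fequiv x x' -> fequiv y y' ->
  fequiv (mulf x y) (mulf x' y').
Proof.
move=> /fequivP [u [Mu Hu]] /fequivP [v [Mv Hv]]; apply/fequivP.
exists (u * v); split; first exact (maximal_ideal_notinM maxM Mu Mv).
have [-> ->] := mulfE x y; have [-> ->] := mulfE x' y'.
have -> : u * v * (num x * num y * (den x' * den y') - num x' * num y' * (den x * den y)) =
  v * num y * den y' * (u * (num x * den x' - num x' * den x)) +
  u * num x' * den x * (v * (num y * den y' - num y' * den y)) by ring.
by rewrite Hu Hv !mulr0 addr0.
Qed.

Definition add := lift_op2 loc addf.
Definition opp := lift_op1 loc oppf.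
Definition mul := lift_op2 loc mulf.
Definition zero : loc := \pi_loc (mkfrac 0 1).
Definition one : loc := \pi_loc (mkfrac 1 1).

Lemma pi_add : {morph \pi_loc : x y / addf x y >-> add x y}.
Proof. by move=> x y; unlock add; apply/eqmodP/addf_compat; apply: fequiv_repr. Qed.
Canonical pi_add_morph := PiMorph2 pi_add.

Lemma pi_opp : {morph \pi_loc : x / oppf x >-> opp x}.
Proof. by move=> x; unlock opp; apply/eqmodP/oppf_compat; apply: fequiv_repr. Qed.
Canonical pi_opp_morph := PiMorph1 pi_opp.

Lemma pi_mul : {morph \pi_loc : x y / mulf x y >-> mul x y}.
Proof. by move=> x y; unlock mul; apply/eqmodP/mulf_compat; apply: fequiv_repr. Qed.
Canonical pi_mul_morph := PiMorph2 pi_mul.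

Lemma addA : associative add.
Proof.
elim/quotW=> x; elim/quotW=> y; elim/quotW=> z; rewrite !piE; apply: eq_frac.
by rewrite !(addfE _ _).1 !(addfE _ _).2; ring.
Qed.

Lemma addC : commutative add.
Proof.
elim/quotW=> x; elim/quotW=> y; rewrite !piE; apply: eq_frac.
by rewrite !(addfE _ _).1 !(addfE _ _).2; ring.
Qed.

Lemma add0 : left_id zero add.
Proof.
elim/quotW=> x; rewrite /zero !piE; apply: eq_frac.
rewrite !(addfE _ _).1 !(addfE _ _).2.
by have [-> ->] := mkfracE 0 notM1; ring.
Qed.

Lemma addN : left_inverse zero opp add.
Proof.
elim/quotW=> x; rewrite /zero !piE; apply: eq_frac.
rewrite !(addfE _ _).1 !(addfE _ _).2 (oppfE _).1 (oppfE _).2.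
by have [-> ->] := mkfracE 0 notM1; ring.
Qed.

HB.instance Definition _ := GRing.isZmodule.Build loc addA addC add0 addN.

Lemma mulA : associative mul.
Proof.
elim/quotW=> x; elim/quotW=> y; elim/quotW=> z; rewrite !piE; apply: eq_frac.
by rewrite !(mulfE _ _).1 !(mulfE _ _).2; ring.
Qed.

Lemma mulC : commutative mul.
Proof.
elim/quotW=> x; elim/quotW=> y; rewrite !piE; apply: eq_frac.
by rewrite !(mulfE _ _).1 !(mulfE _ _).2; ring.
Qed.

Lemma mul1 : left_id one mul.
Proof.
elim/quotW=> x; rewrite /one !piE; apply: eq_frac.
rewrite !(mulfE _ _).1 !(mulfE _ _).2.
by have [-> ->] := mkfracE 1 notM1; ring.
Qed.

(* [x (y + z)] and [x y + x z] differ by a factor [den x] in numerator and denominator. *)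
Lemma mulDl : left_distributive mul add.
Proof.
elim/quotW=> x; elim/quotW=> y; elim/quotW=> z; rewrite !piE; apply: eq_frac.
by rewrite !(mulfE _ _).1 !(mulfE _ _).2 !(addfE _ _).1 !(addfE _ _).2
  !(mulfE _ _).1 !(mulfE _ _).2; ring.
Qed.

HB.instance Definition _ := GRing.Zmodule_isComPzRing.Build loc mulA mulC mul1 mulDl.

Definition to_loc (a : R) : loc := \pi_loc (mkfrac a 1).

Lemma to_loc_zmod : zmod_morphism to_loc.
Proof.
move=> a b; change (to_loc (a - b) = add (to_loc a) (opp (to_loc b))).
rewrite /to_loc -pi_opp -pi_add; apply: eq_frac.
have [-> ->] := mkfracE (a - b) notM1.
rewrite (addfE _ _).1 (addfE _ _).2 (oppfE _).1 (oppfE _).2.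
have [-> ->] := mkfracE a notM1.
by have [-> ->] := mkfracE b notM1; ring.
Qed.
HB.instance Definition _ := GRing.isZmodMorphism.Build R loc to_loc to_loc_zmod.

Lemma to_loc_monoid : monoid_morphism to_loc.
Proof.
split=> // a b; change (to_loc (a * b) = mul (to_loc a) (to_loc b)).
rewrite /to_loc -pi_mul; apply: eq_frac.
have [-> ->] := mkfracE (a * b) notM1.
rewrite (mulfE _ _).1 (mulfE _ _).2.
have [-> ->] := mkfracE a notM1.
by have [-> ->] := mkfracE b notM1; ring.
Qed.
HB.instance Definition _ := GRing.isMonoidMorphism.Build R loc to_loc to_loc_monoid.

Lemma to_loc_localization : is_localization_at M (to_loc : {rmorphism R -> loc}).
Proof.
split.
- move=> s Ms; exists (\pi_loc (mkfrac 1 s)).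
  change (mul (to_loc s) (\pi_loc (mkfrac 1 s)) = one).
  rewrite /to_loc -pi_mul; apply: eq_frac; rewrite (mulfE _ _).1 (mulfE _ _).2.
  have [-> ->] := mkfracE s notM1; have [-> ->] := mkfracE 1 Ms.
  by have [-> ->] := mkfracE 1 notM1; ring.
- elim/quotW => x; exists (num x), (den x); split; first exact: den_notin.
  change (mul (\pi_loc x) (to_loc (den x)) = to_loc (num x)).
  rewrite /to_loc -pi_mul; apply: eq_frac; rewrite (mulfE _ _).1 (mulfE _ _).2.
  have [-> ->] := mkfracE (den x) notM1.
  by have [-> ->] := mkfracE (num x) notM1; ring.
- move=> a; rewrite /= /to_loc -[0]/(\pi_loc (mkfrac 0 1)) => /eq_fracP [u [Mu]].
  have [-> ->] := mkfracE a notM1; have [-> ->] := mkfracE 0 notM1.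
  by rewrite mulr1 mul0r subr0 => ua; exists u.
Qed.

End Construction.
End Localization.
HB.export Localization.

Lemma exists_localization (R : comPzRingType) (M : R -> Prop) : is_maximal_ideal M ->
  exists (S : comPzRingType) (phi : {rmorphism R -> S}), is_localization_at M phi.
Proof.
move=> maxM; exists (Localization.loc maxM : comPzRingType).
exists (Localization.to_loc maxM : {rmorphism _ -> _}).
exact: Localization.to_loc_localization.
Qed.

Section Coherence.
Variable T : comPzRingType.

Lemma mx11_eq0 (x : 'M[T]_1) : x = 0 <-> x 0 0 = 0.
Proof.
split=> [-> | x0]; first by rewrite mxE.
by apply/matrixP => i j; rewrite (ord1 i) (ord1 j) x0 mxE.
Qed.

Lemma linear_row_mulmx k (f : 'rV[T]_k -> T^o) : linear f ->
  forall x, f x = (x *m \col_j f (delta_mx 0 j)) 0 0.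
Proof.
move=> lin_f x; have f0 : f 0 = 0.
  apply/(addrI (f 0)); rewrite addr0.
  by have := lin_f 1 0 0; rewrite !scale1r !addr0 => /esym.
have fD : {morph f : u v / u + v} by move=> u v; rewrite -[u in LHS]scale1r lin_f scale1r.
have fZ c u : f (c *: u) = c * f u by rewrite -[c *: u]addr0 lin_f f0 addr0.
rewrite [x in LHS]row_sum_delta (big_morph f fD f0) mxE.
by apply: eq_bigr => j _; rewrite fZ !mxE.
Qed.

Lemma coherent_ker_fg : coherent T -> forall k (a : 'cV[T]_k), ker_fg a.
Proof.
move=> cohT k a.
have /cohT [k' [A [f [lin_f fI If ker_f _]]]] : fg_ideal (ideal_span (fun i => a i 0)).
  by exists k, (fun i => a i 0).
have fE := linear_row_mulmx lin_f.
apply: (@ker_fg_span_eq _ _ _ _ a (\col_j f (delta_mx 0 j))).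
  move=> x; split=> [[z ->]|[z ->]].
  - have [|y fy] := If ((z *m a) 0 0); first by exists (fun i => z 0 i); rewrite mxE.
    by exists y; apply/matrixP => i j; rewrite (ord1 i) (ord1 j) -fE fy.
  - have [c fz] := fI z; exists (\row_i c i); apply/matrixP => i j.
    rewrite (ord1 i) (ord1 j) -fE fz mxE.
    by apply: eq_bigr => l _; rewrite mxE.
by exists (k' 1%N), (A 0%N) => x; rewrite mx11_eq0 -fE; exact: ker_f.
Qed.

Lemma ker_fg_coherent : (forall k (a : 'cV[T]_k), ker_fg a) -> coherent T.
Proof.
move=> kerT I [k [a0 Ia0]]; pose a := \col_i a0 i.
have [r [C aC]] := kerT k a.
pose dim (i : nat) := if i is 0 then k else r.
pose A (i : nat) : 'M[T]_(dim i.+1, dim i) := if i is 0 then C else 0.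
exists dim, A, (fun x : 'rV_k => (x *m a) 0 0 : T^o); split => //.
- by move=> c u v; rewrite mulmxDl -scalemxAl !mxE.
- move=> x; apply/Ia0; exists (fun i => x 0 i); rewrite mxE.
  by apply: eq_bigr => i _; rewrite mxE.
- move=> y /Ia0 [c ->]; exists (\row_i c i); rewrite mxE.
  by apply: eq_bigr => i _; rewrite !mxE.
- by move=> _ x; rewrite -mx11_eq0; exact: aC.
Qed.

Lemma coherentP : coherent T <-> forall k (a : 'cV[T]_k), ker_fg a.
Proof. by split; [apply: coherent_ker_fg | apply: ker_fg_coherent]. Qed.

Lemma ker_fg_scale p q (u w : T) (a : 'M[T]_(p, q)) :
  u * w = 1 -> ker_fg (u *: a) -> ker_fg a.
Proof.
move=> uw [r [G HG]]; exists r, G => x; rewrite -HG -scalemxAr; split=> [-> | xa0].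
  by rewrite scaler0.
by rewrite -[x *m a]scale1r -uw mulrC -scalerA xa0 scaler0.
Qed.

End Coherence.

Lemma coherent_localization (R S : comPzRingType) (M : R -> Prop)
    (phi : {rmorphism R -> S}) :
  is_maximal_ideal M -> is_localization_at M phi -> coherent R -> coherent S.
Proof.
move=> maxM locS /coherentP kerR; apply/coherentP => k a.
have [t [c [Mt tac]]] := loc_common_denominator maxM locS a.
have [w tw] := loc_invertible locS Mt.
by apply: (ker_fg_scale tw); rewrite tac; apply: (ker_fg_map maxM locS).
Qed.

Lemma coherent_of_localizations (R : comPzRingType) : semi_local R ->
  (forall M, is_maximal_ideal M -> forall (S : comPzRingType) (phi : {rmorphism R -> S}),
     is_localization_at M phi -> coherent S) ->
  coherent R.
Proof.
move=> semiR cohS; apply/coherentP => k a; apply: ker_fg_of_locally_fg => // M maxM.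
have [S [phi locS]] := exists_localization maxM.
apply: (loc_ker_gen_of_map maxM locS).
exact/(coherent_ker_fg (cohS M maxM S phi locS)).
Qed.

Section SemiLocalArithmetic.
Variable R : comPzRingType.
Hypotheses (semiR : semi_local R) (arithR : arithmetic R).

Lemma ker_fg_of_ker_span_semi_local p q r (B : 'M[R]_(p, q)) (C : 'M[R]_(r, p)) :
  ker_span B C -> ker_fg C.
Proof.
move=> BC; apply: ker_fg_of_locally_fg => // M maxM.
have [S [phi locS]] := exists_localization maxM.
apply: (loc_ker_gen_of_map maxM locS).
apply: (ker_fg_of_ker_span (valuation_ring_dvd_total (arithR maxM locS))).
exact: (ker_span_map maxM locS BC).
Qed.

Record exact_pair := ExactPair {
  dim0 : nat; dim1 : nat; dim2 : nat;
  map1 : 'M[R]_(dim1, dim0); map2 : 'M[R]_(dim2, dim1);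
  exact_at1 : ker_span map1 map2 }.

Definition next_pair (s : exact_pair) : exact_pair :=
  let ker2 := cid (ker_fg_of_ker_span_semi_local (@exact_at1 s)) in
  let gen3 := cid (projT2 ker2) in
  ExactPair (projT2 gen3).

(* Any exact [F_2 -> F_1 -> F_0 -> E -> 0] extends to the left forever by
   iterating [next_pair]. *)
Lemma lambda_dim_le2 : lambda_dim_le R 2.
Proof.
exists 2%N; split => // E [k [A [f [lin_f fE Ef ker_f exactA]]]].
pose pair0 := ExactPair (exactA 0%N isT).
pose pairs (i : nat) := iter i next_pair pair0.
move=> n; exists (fun i => dim0 (pairs i)), (fun i => map1 (pairs i)), f.
split=> // [_ | i _]; first exact: ker_f.
exact: (@exact_at1 (pairs i)).
Qed.

End SemiLocalArithmetic.

Theorem corollary2p12 (R : comPzRingType) :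
  semi_local R -> arithmetic R ->
  lambda_dim_le R 2 /\
  (coherent R <->
   forall M : R -> Prop, is_maximal_ideal M ->
     forall (S : comPzRingType) (phi : {rmorphism R -> S}),
       is_localization_at M phi -> coherent S).
Proof.
move=> semiR arithR; split; first exact: lambda_dim_le2.
split; last exact: coherent_of_localizations.
by move=> cohR M maxM S phi locS; exact: coherent_localization maxM locS cohR.
Qed.
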